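(* Let $P$ be an Eulerian poset of rank $d>0$. Then (i) $B(P;u,1)=(1-u)^d$ and $B(P;1,v)=0$; (ii) the degree of $B(P;u,v)$ with respect to $v$ is less than $d/2$.
   Context: An Eulerian poset is a finite poset with least element $\hat0$, greatest element $\hat1$, all maximal chains of the same length $d$ (the rank), rank function $\rho$, and Möbius function $\mu(x,y)=(-1)^{\rho(y)-\rho(x)}$ for $x\le y$; intervals $[x,y]$ are Eulerian of rank $\rho(y)-\rho(x)$. For Eulerian $Q$ of rank $e$: $G(Q,t)=H(Q,t)=1$ if $e=0$; for $e>0$, $H(Q,t)=\sum_{\hat0<x\le\hat1}(t-1)^{\rho(x)-1}G([x,\hat1],t)$, $G(Q,t)=\tau_{<e/2}((1-t)H(Q,t))$ with $\tau_{<r}(\sum a_it^i)=\sum_{i<r}a_it^i$. $B(Q;u,v)\in\mathbb{Z}[u,v]$ is defined by $B=1$ if $e=0$ and for $e>0$ recursively by $\sum_{\hat0\le x\le\hat1}B([\hat0,x];u,v)u^{e-\rho(x)}G([x,\hat1],u^{-1}v)=G(Q,uv)$. *)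

From mathcomp Require Import all_boot all_order all_algebra.
Set Implicit Arguments. Unset Strict Implicit. Unset Printing Implicit Defensive.
Import GRing.Theory Num.Theory.
Local Open Scope ring_scope.

Section EulerianDefs.
Variables (T : finType) (le : rel T).

Definition ltP (x y : T) : bool := (x != y) && le x y.

Definition is_chain (C : {set T}) : bool :=
  [forall a in C, forall c in C, le a c || le c a].
Definition interval (x y : T) : {set T} := [set z | le x z && le z y].
Definition chain_in (x y : T) (C : {set T}) : bool :=
  (C \subset interval x y) && is_chain C.
(* maximal chains of [x,y] (maximal w.r.t. inclusion); length = #|C| - 1 *)
Definition maxchain (x y : T) (C : {set T}) : bool :=
  chain_in x y C &&
  [forall C' : {set T}, (chain_in x y C' && (C \subset C')) ==> (C' == C)].

(* rank of the interval [x,y]: the length of a longest chain of [x,y]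
   (= the common length of all maximal chains in a graded interval) *)
Definition rk (x y : T) : nat :=
  (\max_(C : {set T} | chain_in x y C) #|C|).-1.

(* Moebius function, by the usual recursion mu(x,x)=1,
   mu(x,y) = - sum_{x<=z<y} mu(x,z); fuel #|T| suffices. *)
Fixpoint mob_fuel (n : nat) (x y : T) : int :=
  if x == y then 1 else
  if le x y then
    match n with
    | 0 => 0
    | n'.+1 => - \sum_(z : T | le x z && ltP z y) mob_fuel n' x z
    end
  else 0.
Definition mobius (x y : T) : int := mob_fuel #|T| x y.

Definition eulerian (b t : T) : Prop :=
  [/\ reflexive le, antisymmetric le & transitive le] /\
  [/\ (forall x, le b x), (forall x, le x t),
      (forall C1 C2, maxchain b t C1 -> maxchain b t C2 -> #|C1| = #|C2|) &
      (forall x y, le x y -> mobius x y = (-1) ^+ (rk b y - rk b x))].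

Definition trunc_half (e : nat) (p : {poly int}) : {poly int} :=
  \poly_(i < size p) (if (i.*2 < e)%N then p`_i else 0).

Fixpoint GH_fuel (n : nat) (x y : T) : {poly int} * {poly int} :=
  match n with
  | 0 => (1, 1)
  | n'.+1 =>
    let e := rk x y in
    if e == 0%N then (1, 1) else
    let H := \sum_(z : T | ltP x z && le z y)
               ('X - 1) ^+ (rk x z).-1 * (GH_fuel n' z y).1 in
    (trunc_half e ((1 - 'X) * H), H)
  end.
Definition Gpoly (x y : T) : {poly int} := (GH_fuel #|T| x y).1.
Definition Hpoly (x y : T) : {poly int} := (GH_fuel #|T| x y).2.

(* Bivariate polynomials Z[u,v] are {poly {poly int}}:
   the outer variable is v, the coefficients are polynomials in u. *)
Definition uvar : {poly {poly int}} := ('X : {poly int})%:P.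
Definition vvar : {poly {poly int}} := 'X.

Definition subst_uv (g : {poly int}) : {poly {poly int}} :=
  \sum_(i < size g) (g`_i)%:P%:P * (uvar * vvar) ^+ i.
(* u^r g(u^{-1} v)  (a polynomial since deg g <= r for the G's used) *)
Definition hom_uv (r : nat) (g : {poly int}) : {poly {poly int}} :=
  \sum_(i < size g) (g`_i)%:P%:P * uvar ^+ (r - i) * vvar ^+ i.

Fixpoint B_fuel (n : nat) (x y : T) : {poly {poly int}} :=
  match n with
  | 0 => 1
  | n'.+1 =>
    let e := rk x y in
    if e == 0%N then 1 else
    subst_uv (Gpoly x y)
    - \sum_(z : T | le x z && ltP z y)
        B_fuel n' x z * hom_uv (e - rk x z) (Gpoly z y)
  end.
Definition Bpoly (x y : T) : {poly {poly int}} := B_fuel #|T| x y.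

End EulerianDefs.

(* Since all maximal chains of [b,t] have the same length, the rank is additive on
   intervals, so the Eulerian hypothesis reads mu(x,y) = (-1)^rk(x,y), and summing it over
   an interval gives the inversion formula
     sum_(x <= w <= y) (-a)^rk(x,w) sum_(w <= v <= y) a^rk(w,v) F(v) = F(x).
   By induction on the rank, the inversion makes (1 - t) H([x,y]) antisymmetric under
   p |-> t^e p(1/t), and truncating it below e/2 yields the symmetry
     t^e G([x,y], 1/t) = sum_(x <= v <= y) (t - 1)^rk(x,v) G([v,y], t).
   At v = 1 the recursion for B then becomes, by induction, an instance of the inversion
   formula, which leaves (1 - u)^e. At u = 1 the terms with x < z vanish by induction and
   the term z = x cancels G([x,y], v). Finally, every term of the recursion has v-degree
   below e/2 because deg G([z,y]) < rk(z,y)/2. *)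

From Pilot Require Import Defs.
From mathcomp Require Import all_boot all_order all_algebra zify.
Import GRing.Theory Num.Theory.
Set Implicit Arguments. Unset Strict Implicit. Unset Printing Implicit Defensive.
Local Open Scope ring_scope.

Section Reversal.
Variable R : comNzRingType.
Implicit Types p q : {poly R}.

(* [revn e p] is t^e p(1/t) when p has degree at most e. *)
Definition revn (e : nat) p : {poly R} := \sum_(i < e.+1) p`_i *: 'X^(e - i).

Lemma coef_revn e p k : (revn e p)`_k = if (k <= e)%N then p`_(e - k) else 0.
Proof.
rewrite coef_sumMXn; case: leqP => [le_ke | lt_ek].
  have lt_ek : (e - k < e.+1)%N by lia.
  rewrite (big_pred1 (Ordinal lt_ek)) // => i /=.
  have := ltn_ord i; rewrite -val_eqE /= => lt_ie.
  by apply/idP/idP => /eqP h; apply/eqP; lia.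
by rewrite big_pred0 // => i; apply/eqP; move: (ltn_ord i); lia.
Qed.

Lemma revnD e : {morph revn e : p q / p + q}.
Proof.
by move=> p q; rewrite -big_split; apply: eq_bigr => i _; rewrite coefD scalerDl.
Qed.

Lemma revn0 e : revn e 0 = 0.
Proof. by rewrite /revn big1 // => i _; rewrite coef0 scale0r. Qed.

Lemma revnN e p : revn e (- p) = - revn e p.
Proof. by rewrite /revn -sumrN; apply: eq_bigr => i _; rewrite coefN scaleNr. Qed.

Lemma revn_sum e (I : Type) (r : seq I) (P : pred I) (F : I -> {poly R}) :
  revn e (\sum_(i <- r | P i) F i) = \sum_(i <- r | P i) revn e (F i).
Proof. exact: (big_morph (revn e) (revnD e) (revn0 e)). Qed.

Lemma revn_scaleXn e c k : (k <= e)%N -> revn e (c *: 'X^k) = c *: 'X^(e - k).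
Proof.
move=> le_ke; apply/polyP => j; rewrite coef_revn !coefZ !coefXn.
case: leqP => [le_je | lt_ej]; first by congr (_ * _%:R); apply/eqP/eqP; lia.
by rewrite (_ : (j == e - k)%N = false) ?mulr0 //; apply/eqP; lia.
Qed.

Lemma poly_sum_widen n p : (size p <= n)%N -> p = \sum_(i < n) p`_i *: 'X^i.
Proof.
move=> le_pn; rewrite -poly_def; apply/polyP => j; rewrite coef_poly.
by case: ltnP => // le_nj; rewrite nth_default // (leq_trans le_pn).
Qed.

Lemma revnM a b p q : (size p <= a.+1)%N -> (size q <= b.+1)%N ->
  revn (a + b) (p * q) = revn a p * revn b q.
Proof.
move=> /poly_sum_widen {1}-> /poly_sum_widen {1}->.
rewrite big_distrl revn_sum big_distrl; apply: eq_bigr => i _.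
rewrite big_distrr revn_sum big_distrr; apply: eq_bigr => j _ /=.
have [lt_ia lt_jb] := (ltn_ord i, ltn_ord j).
rewrite -scalerAr -scalerAl scalerA -exprD revn_scaleXn; last by lia.
rewrite -scalerAr -scalerAl scalerA -exprD; congr (_ *: 'X^_); lia.
Qed.

Lemma revn01 : revn 0 1 = 1.
Proof. by rewrite /revn big_ord1 coef1 scale1r. Qed.

Lemma size_Xsub1_exp n : size (('X - 1 : {poly R}) ^+ n) = n.+1.
Proof. by rewrite -polyC1 size_exp_XsubC. Qed.

Lemma revn_Xsub1_exp a : revn a (('X - 1) ^+ a) = (1 - 'X) ^+ a.
Proof.
elim: a => [|a IHa]; first by rewrite !expr0 revn01.
rewrite exprSr -addn1 revnM ?size_Xsub1_exp //; last by rewrite -polyC1 size_XsubC.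
rewrite IHa addn1 exprSr; congr (_ * _).
apply/polyP => k; rewrite coef_revn !coefB coefX coef1.
by case: k => [|[|k]] //=; rewrite !(coefB, coefX, coef1) /= ?subr0 ?sub0r.
Qed.

End Reversal.

Lemma coef_trunc_half e (p : {poly int}) k :
  (trunc_half e p)`_k = if (k.*2 < e)%N then p`_k else 0.
Proof.
rewrite coef_poly; case: ltnP => // le_pk.
by rewrite nth_default //; case: ifP.
Qed.

Lemma deg_trunc_half e (p : {poly int}) : (0 < e)%N ->
  ((size (trunc_half e p)).-1.*2 < e)%N.
Proof.
move=> e_gt0; have [-> | nz_q] := eqVneq (trunc_half e p) 0; first by rewrite size_poly0.
move: nz_q; rewrite -lead_coef_eq0 lead_coefE coef_trunc_half.
by case: ifP; rewrite ?eqxx.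
Qed.

(* The middle coefficient of an antisymmetric K is its own opposite, hence 0 in int. *)
Lemma revn_trunc_half e (K : {poly int}) : (size K <= e.+1)%N -> revn e K = - K ->
  revn e (trunc_half e K) = trunc_half e K - K.
Proof.
move=> size_K revnK.
have K_sym j : (j <= e)%N -> K`_(e - j) = - K`_j.
  by move=> le_je; move/polyP: revnK => /(_ j); rewrite coef_revn le_je coefN.
apply/polyP => k; rewrite coef_revn coefB !coef_trunc_half.
case: (leqP k e) => [le_ke | lt_ek]; last first.
  by rewrite nth_default ?(leq_trans size_K) // ifN ?subrr //; lia.
case: (ltngtP k.*2 e) => [lt_2ke | lt_e2k | eq_2ke].
- by rewrite ifN ?subrr //; lia.
- by rewrite ifT ?sub0r ?K_sym //; lia.
have mid : (e - k = k)%N by lia.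
have := K_sym k le_ke; rewrite mid => /eqP; rewrite -subr_eq0 opprK -mulr2n.
by rewrite mulrn_eq0 /= => /eqP ->; rewrite subrr if_same.
Qed.

Implicit Types g : {poly int}.

Lemma uvarX i : uvar ^+ i = ('X^i)%:P.
Proof. by rewrite /uvar rmorphXn. Qed.

Lemma subst_uvE g : subst_uv g = \poly_(i < size g) (g`_i *: 'X^i).
Proof.
rewrite poly_def; apply: eq_bigr => i _.
by rewrite exprMn mulrA uvarX -polyCM mul_polyC -[g`_i *: _]mul_polyC.
Qed.

Lemma hom_uvE r g : hom_uv r g = \poly_(i < size g) (g`_i *: 'X^(r - i)).
Proof.
rewrite poly_def; apply: eq_bigr => i _.
by rewrite uvarX -polyCM mul_polyC -[g`_i *: _]mul_polyC.
Qed.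

Lemma size_subst_uv g : (size (subst_uv g) <= size g)%N.
Proof. by rewrite subst_uvE size_poly. Qed.

Lemma size_hom_uv r g : (size (hom_uv r g) <= size g)%N.
Proof. by rewrite hom_uvE size_poly. Qed.

Lemma subst_uv_v1 g : (subst_uv g).[1] = g.
Proof.
rewrite subst_uvE horner_poly -[RHS]coefK poly_def.
by apply: eq_bigr => i _; rewrite expr1n mulr1.
Qed.

Lemma hom_uv_v1 r g : (size g <= r.+1)%N -> (hom_uv r g).[1] = revn r g.
Proof.
move=> size_g; rewrite hom_uvE horner_poly.
under eq_bigr do rewrite expr1n mulr1.
rewrite (big_ord_widen r.+1 (fun i => g`_i *: 'X^(r - i)) size_g) big_mkcond.
by apply: eq_bigr => i _; case: ltnP => // le_gi; rewrite nth_default ?scale0r.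
Qed.

Lemma map_poly_horner1 g (m : nat -> nat) :
  map_poly (horner_eval 1) (\poly_(i < size g) (g`_i *: 'X^(m i))) = g.
Proof.
apply/polyP => k; rewrite coef_map coef_poly /=.
case: ltnP => [_ | le_gk]; last by rewrite nth_default ?rmorph0.
by rewrite /horner_eval hornerZ hornerXn expr1n mulr1.
Qed.

Lemma subst_uv_u1 g : map_poly (horner_eval 1) (subst_uv g) = g.
Proof. by rewrite subst_uvE map_poly_horner1. Qed.

Lemma hom_uv_u1 r g : map_poly (horner_eval 1) (hom_uv r g) = g.
Proof. by rewrite hom_uvE map_poly_horner1. Qed.

Section EulerianPoset.
Variables (T : finType) (le : rel T).
Hypotheses (reflT : reflexive le) (antiT : antisymmetric le) (transT : transitive le).
Implicit Types (x y z : T) (A B C D : {set T}).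

Local Notation rk := (rk le).
Local Notation chain_in := (chain_in le).

Lemma is_chainP C :
  reflect {in C &, forall a c, le a c || le c a} (is_chain le C).
Proof.
apply: (iffP forallP) => [chC a c aC cC | chC a].
  by move/implyP/(_ aC)/forallP/(_ c)/implyP: (chC a); apply.
by apply/implyP => aC; apply/forallP => c; apply/implyP; apply: chC.
Qed.

Lemma chain_inP x y C :
  reflect ({in C, forall z, le x z && le z y} /\ {in C &, forall a c, le a c || le c a})
          (chain_in x y C).
Proof.
apply: (iffP andP) => [[/subsetP sCI /is_chainP chC] | [sCI chC]]; split => //.
- by move=> z /sCI; rewrite inE.
- by apply/subsetP => z /sCI; rewrite inE.
- exact/is_chainP.
Qed.

Definition chain_height x y := \max_(C | chain_in x y C) #|C|.

Lemma rkE x y : rk x y = (chain_height x y).-1.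
Proof. by []. Qed.

Lemma leq_chain_height x y C : chain_in x y C -> (#|C| <= chain_height x y)%N.
Proof. exact: (@leq_bigmax_cond _ (chain_in x y) (fun C : {set T} => #|C|)). Qed.

Lemma exists_longest_chain x y : exists2 C, chain_in x y C & #|C| = chain_height x y.
Proof.
have : (0 < #|[pred C | chain_in x y C]|)%N.
  by apply/card_gt0P; exists set0; rewrite inE; apply/chain_inP; split=> ?; rewrite inE.
move/(eq_bigmax_cond (fun C : {set T} => #|C|)) => [C chC maxC].
by exists C; rewrite // /chain_height maxC.
Qed.

Lemma chain_in1 x y : le x y -> chain_in x y [set x].
Proof.
move=> xy; apply/chain_inP; split=> [z | a c]; rewrite !inE.
  by move/eqP->; rewrite reflT xy.
by move=> /eqP-> /eqP->; rewrite reflT.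
Qed.

Lemma chain_height_gt0 x y : le x y -> (0 < chain_height x y)%N.
Proof. by move=> xy; rewrite -(cards1 x) leq_chain_height ?chain_in1. Qed.

Lemma chain_inU1 x y z C : chain_in x y C -> le x z -> le z y ->
  {in C, forall c, le c z || le z c} -> chain_in x y (z |: C).
Proof.
move=> /chain_inP [sCI chC] xz zy cmp_z; apply/chain_inP; split.
  by move=> w /setU1P [-> | /sCI]; rewrite ?xz ?zy.
move=> a c /setU1P [-> | aC] /setU1P [-> | cC]; rewrite ?reflT //.
- by rewrite orbC cmp_z.
- by rewrite cmp_z.
- exact: chC.
Qed.

Lemma longest_chain_mem x y z C : chain_in x y C -> #|C| = chain_height x y ->
  le x z -> le z y -> {in C, forall c, le c z || le z c} -> z \in C.
Proof.
move=> chC maxC xz zy cmp_z; apply/negPn/negP => zNC.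
have := leq_chain_height (chain_inU1 chC xz zy cmp_z).
by rewrite cardsU1 zNC maxC ltnn.
Qed.

Lemma longest_chain_absorb x y z C D : chain_in x y C -> #|C| = chain_height x y ->
  C \subset D -> is_chain le D -> z \in D -> le x z -> le z y -> z \in C.
Proof.
move=> chC maxC /subsetP sCD /is_chainP chD zD xz zy.
by apply: (longest_chain_mem chC maxC) => // c cC; apply: chD => //; apply: sCD.
Qed.

Lemma longest_chain_ends x y C : le x y -> chain_in x y C ->
  #|C| = chain_height x y -> x \in C /\ y \in C.
Proof.
move=> xy chC maxC; have /chain_inP [sCI _] := chC.
split; apply: (longest_chain_mem chC maxC); rewrite ?reflT // => c /sCI /andP [xc cy].
  by rewrite xc orbT.
by rewrite cy.
Qed.

Lemma chain_inU x z y A B : le x z -> le z y ->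
  chain_in x z A -> chain_in z y B -> chain_in x y (A :|: B).
Proof.
move=> xz zy /chain_inP [sAI chA] /chain_inP [sBI chB]; apply/chain_inP; split.
  move=> w /setUP [/sAI /andP [xw wz] | /sBI /andP [zw wy]].
    by rewrite xw (transT wz zy).
  by rewrite wy (transT xz zw).
move=> a c /setUP [aA | aB] /setUP [cA | cB]; try by [apply: chA | apply: chB].
  by have /andP [_ az] := sAI a aA; have /andP [zc _] := sBI c cB; rewrite (transT az zc).
by have /andP [_ cz] := sAI c cA; have /andP [za _] := sBI a aB; rewrite (transT cz za) orbT.
Qed.

Lemma rk_superadditive x z y : le x z -> le z y -> (rk x z + rk z y <= rk x y)%N.
Proof.
move=> xz zy; rewrite !rkE.
have [A chA maxA] := exists_longest_chain x z.
have [B chB maxB] := exists_longest_chain z y.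
have AIB_le1 : (#|A :&: B| <= 1)%N.
  rewrite -(cards1 z); apply/subset_leq_card/subsetP => w /setIP [wA wB].
  have /chain_inP [sAI _] := chA; have /chain_inP [sBI _] := chB.
  have /andP [_ wz] := sAI w wA; have /andP [zw _] := sBI w wB.
  by rewrite inE; apply/eqP/antiT; rewrite wz zw.
have := leq_chain_height (chain_inU xz zy chA chB).
rewrite cardsU maxA maxB.
by move: (chain_height_gt0 xz) (chain_height_gt0 zy); lia.
Qed.

Lemma rk_refl x : rk x x = 0%N.
Proof.
rewrite rkE; apply/eqP; rewrite -subn1 subn_eq0; apply/bigmax_leqP => C /chain_inP [sCI _].
rewrite -(cards1 x); apply/subset_leq_card/subsetP => w /sCI.
by rewrite inE => /antiT ->.
Qed.

Lemma rk_gt0 x y : le x y -> x != y -> (0 < rk x y)%N.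
Proof.
move=> xy nxy; have chxy : chain_in x y (y |: [set x]).
  by apply: (chain_inU1 (chain_in1 xy) xy (reflT y)) => c /set1P ->; rewrite xy.
by have := leq_chain_height chxy; rewrite rkE setUC cards2 nxy; lia.
Qed.

Lemma rk_lt_card x y : (rk x y < #|T|)%N.
Proof.
have : (chain_height x y <= #|T|)%N by apply/bigmax_leqP => C _; apply: max_card.
have : (0 < #|T|)%N by apply/card_gt0P; exists x.
by rewrite rkE; lia.
Qed.

Lemma rk_lt_lower x z y : le x z -> le z y -> z != y -> (rk x z < rk x y)%N.
Proof. by move=> xz zy nzy; move: (rk_superadditive xz zy) (rk_gt0 zy nzy); lia. Qed.

Lemma rk_lt_upper x z y : le x z -> le z y -> x != z -> (rk z y < rk x y)%N.
Proof. by move=> xz zy nxz; move: (rk_superadditive xz zy) (rk_gt0 xz nxz); lia. Qed.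

Local Notation lt := (Defs.ltP le).
Local Notation G := (Gpoly le).
Local Notation B := (Bpoly le).

Lemma ltE x y : lt x y = (x != y) && le x y.
Proof. by []. Qed.

Lemma mob_fuel_stable n m x y : (rk x y < n)%N -> (rk x y < m)%N ->
  mob_fuel le n x y = mob_fuel le m x y.
Proof.
elim: n m x y => [|n IHn] [|m] x y //= ltn ltm.
case: eqP => // _; case: ifP => // _; congr (- _).
apply: eq_bigr => z /andP [xz /andP [nzy zy]].
by rewrite (IHn m) //; move: (rk_lt_lower xz zy nzy); lia.
Qed.

Lemma mobius_rec x y : le x y -> x != y ->
  mobius le x y = - \sum_(z | le x z && lt z y) mobius le x z.
Proof.
move=> xy nxy; rewrite /mobius; have := rk_lt_card x y.
case: #|T| => [|n] // ltn; rewrite [LHS]/= (negbTE nxy) xy; congr (- _).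
apply: eq_bigr => z /andP [xz /andP [nzy zy]].
by rewrite (mob_fuel_stable (m := n.+1)) //; move: (rk_lt_lower xz zy nzy); lia.
Qed.

Lemma GH_fuel_stable n m x y : (rk x y < n)%N -> (rk x y < m)%N ->
  GH_fuel le n x y = GH_fuel le m x y.
Proof.
elim: n m x y => [|n IHn] [|m] x y //= ltn ltm.
case: eqP => // _; congr (trunc_half _ (_ * _), _); apply: eq_bigr => z /andP [/andP [nxz xz] zy];
  by rewrite (IHn m) //; move: (rk_lt_upper xz zy nxz); lia.
Qed.

Lemma GH_rec x y : (0 < rk x y)%N ->
  let H := \sum_(z | lt x z && le z y) ('X - 1) ^+ (rk x z).-1 * G z y in
  GH_fuel le #|T| x y = (trunc_half (rk x y) ((1 - 'X) * H), H).
Proof.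
move=> /lt0n_neq0/negbTE rk_neq0; have := rk_lt_card x y; rewrite /Gpoly.
case: #|T| => [|n] // ltn /=; rewrite rk_neq0.
suff -> : \sum_(z | lt x z && le z y) ('X - 1) ^+ (rk x z).-1 * (GH_fuel le n z y).1 =
          \sum_(z | lt x z && le z y) ('X - 1) ^+ (rk x z).-1 * (GH_fuel le n.+1 z y).1 by [].
apply: eq_bigr => z /andP [/andP [nxz xz] zy].
by rewrite (GH_fuel_stable (m := n.+1)) //; move: (rk_lt_upper xz zy nxz); lia.
Qed.

Lemma Hpoly_rec x y : (0 < rk x y)%N ->
  Hpoly le x y = \sum_(z | lt x z && le z y) ('X - 1) ^+ (rk x z).-1 * G z y.
Proof. by move=> rk_neq0; rewrite /Hpoly GH_rec. Qed.

Lemma Gpoly_rec x y : (0 < rk x y)%N ->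
  G x y = trunc_half (rk x y) ((1 - 'X) * Hpoly le x y).
Proof. by move=> rk_neq0; rewrite Hpoly_rec // /Gpoly GH_rec. Qed.

Lemma Gpoly_rk0 x y : rk x y = 0%N -> G x y = 1.
Proof. by move=> rk0; rewrite /Gpoly; case: #|T| => [|n] //=; rewrite rk0. Qed.

Lemma Gpoly_refl x : G x x = 1.
Proof. exact/Gpoly_rk0/rk_refl. Qed.

Lemma deg_Gpoly x y : (0 < rk x y)%N -> ((size (G x y)).-1.*2 < rk x y)%N.
Proof. by move=> rk_gt0; rewrite Gpoly_rec ?deg_trunc_half. Qed.

Lemma size_Gpoly x y : (size (G x y) <= (rk x y).+1)%N.
Proof.
have [rk0 | rk_gt0] := posnP (rk x y); first by rewrite Gpoly_rk0 // size_poly1 rk0.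
by move: (deg_Gpoly rk_gt0); lia.
Qed.

Lemma Hpoly_proper x y : le x y -> x != y ->
  (1 - 'X) * Hpoly le x y = - \sum_(v | lt x v && le v y) ('X - 1) ^+ rk x v * G v y.
Proof.
move=> xy nxy; rewrite Hpoly_rec ?rk_gt0 //.
rewrite -opprB mulNr big_distrr /=; congr (- _); apply: eq_bigr => v /andP [/andP [nxv xv] _].
by rewrite mulrA -exprS prednK ?rk_gt0.
Qed.

Lemma B_fuel_stable n m x y : (rk x y < n)%N -> (rk x y < m)%N ->
  B_fuel le n x y = B_fuel le m x y.
Proof.
elim: n m x y => [|n IHn] [|m] x y //= ltn ltm.
case: eqP => // _; congr (_ - _); apply: eq_bigr => z /andP [xz /andP [nzy zy]].
by rewrite (IHn m) //; move: (rk_lt_lower xz zy nzy); lia.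
Qed.

Lemma Bpoly_rk0 x y : rk x y = 0%N -> B x y = 1.
Proof. by move=> rk0; rewrite /Bpoly; case: #|T| => [|n] //=; rewrite rk0. Qed.

Lemma Bpoly_refl x : B x x = 1.
Proof. exact/Bpoly_rk0/rk_refl. Qed.

Lemma Bpoly_rec x y : (0 < rk x y)%N ->
  B x y = subst_uv (G x y)
          - \sum_(z | le x z && lt z y) B x z * hom_uv (rk x y - rk x z) (G z y).
Proof.
move=> /lt0n_neq0/negbTE rk_neq0; have := rk_lt_card x y; rewrite {1}/Bpoly.
case E: #|T| => [|n] // ltn /=; rewrite rk_neq0; congr (_ - _).
apply: eq_bigr => z /andP [xz /andP [nzy zy]].
by rewrite /Bpoly E (B_fuel_stable (m := n.+1)) //; move: (rk_lt_lower xz zy nzy); lia.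
Qed.

Lemma sum_interval_first (V : nmodType) (F : T -> V) x y : le x y ->
  \sum_(w | le x w && le w y) F w = F x + \sum_(w | lt x w && le w y) F w.
Proof.
move=> xy; rewrite (bigD1 x) /= ?reflT ?xy //; congr (_ + _).
by apply: eq_bigl => w; rewrite ltE [x == w]eq_sym andbC andbA.
Qed.

Lemma sum_interval_last (V : nmodType) (F : T -> V) x y : le x y ->
  \sum_(w | le x w && le w y) F w = F y + \sum_(w | le x w && lt w y) F w.
Proof.
move=> xy; rewrite (bigD1 y) /= ?reflT ?xy //; congr (_ + _).
by apply: eq_bigl => w; rewrite ltE -andbA [le w y && _]andbC.
Qed.

Lemma sum_interval_refl (V : nmodType) (F : T -> V) x :
  \sum_(w | le x w && le w x) F w = F x.
Proof.
rewrite (sum_interval_first _ (reflT x)) big1 ?addr0 // => w /andP [/andP [nxw xw] wx].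
by move: nxw; rewrite (@antiT x w) ?xw ?wx ?eqxx.
Qed.

Lemma sum_mobius x y : le x y -> \sum_(z | le x z && le z y) mobius le x z = (x == y)%:R.
Proof.
move=> xy; have [<- | nxy] := eqVneq x y.
  by rewrite sum_interval_refl /mobius; case: #|T| => [|n] /=; rewrite eqxx.
by rewrite (sum_interval_last _ xy) (mobius_rec xy nxy) addNr.
Qed.

Variables (b t : T).
Hypotheses (bot_le : forall x, le b x) (le_top : forall x, le x t).
Hypothesis maxchain_card_eq :
  forall C1 C2, maxchain le b t C1 -> maxchain le b t C2 -> #|C1| = #|C2|.

Lemma maxchain_card C : maxchain le b t C -> #|C| = chain_height b t.
Proof.
move=> maxC; have [L chL maxL] := exists_longest_chain b t.
rewrite -maxL; apply: maxchain_card_eq => //; apply/andP; split => //.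
apply/forallP => C'; apply/implyP => /andP [chC' sLC'].
by rewrite eq_sym eqEcard sLC' maxL leq_chain_height.
Qed.

Lemma maxchain_longestU x y A B C : le x y ->
  chain_in b x A -> #|A| = chain_height b x ->
  chain_in x y B -> #|B| = chain_height x y ->
  chain_in y t C -> #|C| = chain_height y t ->
  maxchain le b t (A :|: B :|: C).
Proof.
move=> xy chA maxA chB maxB chC maxC.
have chU := chain_inU (transT (bot_le x) xy) (le_top y)
  (chain_inU (bot_le x) xy chA chB) chC.
apply/andP; split => //; apply/forallP => D; apply/implyP => /andP [/andP [_ chD] sUD].
rewrite eqEsubset sUD andbT; apply/subsetP => z zD.
have [_ xA] := longest_chain_ends (bot_le x) chA maxA.
have [yC _] := longest_chain_ends (le_top y) chC maxC.
have /is_chainP cmpD := chD.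
have xD : x \in D by apply: (subsetP sUD); rewrite !inE xA.
have yD : y \in D by apply: (subsetP sUD); rewrite !inE yC !orbT.
have sAD : A \subset D by apply: subset_trans sUD; rewrite -setUA subsetUl.
have sBD : B \subset D by apply: subset_trans sUD; rewrite setUAC subsetUr.
have sCD : C \subset D by apply: subset_trans sUD; rewrite subsetUr.
case/orP: (cmpD z x zD xD) => [zx | xz].
  by rewrite !inE (longest_chain_absorb chA maxA sAD chD zD (bot_le z) zx).
case/orP: (cmpD z y zD yD) => [zy | yz].
  by rewrite !inE (longest_chain_absorb chB maxB sBD chD zD xz zy) orbT.
by rewrite !inE (longest_chain_absorb chC maxC sCD chD zD yz (le_top z)) !orbT.
Qed.

Lemma rk_bot_add x y : le x y -> rk b y = (rk b x + rk x y)%N.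
Proof.
move=> xy.
have [A chA maxA] := exists_longest_chain b x.
have [B chB maxB] := exists_longest_chain x y.
have [C chC maxC] := exists_longest_chain y t.
have [_ xA] := longest_chain_ends (bot_le x) chA maxA.
have [xB yB] := longest_chain_ends xy chB maxB.
have [yC _] := longest_chain_ends (le_top y) chC maxC.
have := maxchain_card (maxchain_longestU xy chA maxA chB maxB chC maxC).
rewrite cardsU cardsU maxA maxB maxC.
have : (0 < #|A :&: B|)%N by apply/card_gt0P; exists x; rewrite inE xA.
have : (0 < #|(A :|: B) :&: C|)%N by apply/card_gt0P; exists y; rewrite !inE yB yC orbT.
have : (#|A :&: B| <= chain_height b x)%N by rewrite -maxA subset_leq_card ?subsetIl.
have : (#|(A :|: B) :&: C| <= chain_height y t)%N by rewrite -maxC subset_leq_card ?subsetIr.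
move: (rk_superadditive (bot_le x) xy) (rk_superadditive (bot_le y) (le_top y)).
move: (chain_height_gt0 (bot_le x)) (chain_height_gt0 xy) (chain_height_gt0 (le_top y)).
by rewrite !rkE; lia.
Qed.

Lemma rk_add x z y : le x z -> le z y -> rk x y = (rk x z + rk z y)%N.
Proof.
move=> xz zy.
by move: (rk_bot_add xz) (rk_bot_add zy) (rk_bot_add (transT xz zy)); lia.
Qed.

Hypothesis mobius_sign : forall x y, le x y -> mobius le x y = (-1) ^+ (rk b y - rk b x).

Lemma sum_sign_rk (R : pzRingType) x y : le x y ->
  \sum_(z | le x z && le z y) (-1) ^+ rk x z = (x == y)%:R :> R.
Proof.
move=> xy; have := congr1 (fun k : int => k%:~R : R) (sum_mobius xy).
rewrite /= rmorph_sum rmorph_nat => <-; apply: eq_bigr => z /andP [xz _].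
by rewrite mobius_sign ?(rk_bot_add xz) ?addKn ?rmorph_sign.
Qed.

Lemma eulerian_inversion (R : pzRingType) (a : R) (F : T -> R) x y : le x y ->
  \sum_(w | le x w && le w y) (- a) ^+ rk x w *
     \sum_(v | le w v && le v y) a ^+ rk w v * F v = F x.
Proof.
move=> xy.
transitivity (\sum_(w | le x w && le w y) \sum_(v | le w v && le v y)
                (-1) ^+ rk x w * (a ^+ rk x v * F v)).
  apply: eq_bigr => w /andP [xw _]; rewrite big_distrr /=; apply: eq_bigr => v /andP [wv _].
  by rewrite (rk_add xw wv) exprNn exprD !mulrA.
rewrite (exchange_big_dep (fun v => le x v && le v y)) /=; last first.
  by move=> w v /andP [xw _] /andP [wv vy]; rewrite (transT xw wv) vy.
transitivity (\sum_(v | le x v && le v y) (x == v)%:R * (a ^+ rk x v * F v)).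
  apply: eq_bigr => v /andP [xv vy]; rewrite -big_distrl -(sum_sign_rk _ xv); congr (_ * _).
  apply: eq_bigl => w; rewrite vy andbT.
  by case xw: (le x w); case wv: (le w v); rewrite ?andbF //= (transT wv vy).
rewrite (sum_interval_first _ xy) eqxx rk_refl expr0 !mul1r big1 ?addr0 //.
by move=> v /andP [/andP [nxv _] _]; rewrite (negbTE nxv) mul0r.
Qed.

Lemma revn_Gpoly x y : le x y ->
  revn (rk x y) (G x y) = \sum_(v | le x v && le v y) ('X - 1) ^+ rk x v * G v y.
Proof.
have [n] := ubnP (rk x y); elim: n x y => // n IHn x y rk_lt_n xy.
have [<- | nxy] := eqVneq x y.
  by rewrite sum_interval_refl rk_refl Gpoly_refl expr0 mul1r revn01.
set e := rk x y; set S := \sum_(v | lt x v && le v y) ('X - 1) ^+ rk x v * G v y.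
have e_gt0 : (0 < e)%N := rk_gt0 xy nxy.
have size_S : (size S <= e.+1)%N.
  rewrite (leq_trans (size_sum _ _ _)) //; apply/bigmax_leqP => v /andP [/andP [_ xv] vy].
  rewrite (leq_trans (size_polyMleq _ _)) // size_Xsub1_exp.
  by rewrite addSn /= /e (rk_add xv vy) -addnS leq_add2l size_Gpoly.
have revn_S : revn e S = - S.
  rewrite revn_sum.
  transitivity (\sum_(v | lt x v && le v y) (1 - 'X) ^+ rk x v *
                  \sum_(u | le v u && le u y) ('X - 1) ^+ rk v u * G u y).
    apply: eq_bigr => v /andP [/andP [nxv xv] vy].
    rewrite /e (rk_add xv vy) revnM ?size_Xsub1_exp ?size_Gpoly // revn_Xsub1_exp.
    by rewrite (IHn v y (leq_trans (rk_lt_upper xv vy nxv) rk_lt_n) vy).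
  have := eulerian_inversion ('X - 1) (fun u => G u y) xy.
  rewrite opprB !(sum_interval_first _ xy) rk_refl expr0 !mul1r -/S => inversion.
  by apply: (addrI (G x y + S)); rewrite inversion addrK.
have G_eq : G x y = trunc_half e (- S) by rewrite Gpoly_rec ?Hpoly_proper.
rewrite (sum_interval_first _ xy) rk_refl expr0 mul1r G_eq.
by rewrite revn_trunc_half ?size_opp ?revnN ?revn_S ?opprK.
Qed.

Lemma sum_revn_Gpoly x y : le x y ->
  \sum_(z | le x z && le z y) (1 - 'X) ^+ rk x z * revn (rk z y) (G z y) = G x y.
Proof.
move=> xy; rewrite -[RHS](eulerian_inversion ('X - 1) (fun u => G u y) xy) opprB.
by apply: eq_bigr => z /andP [_ zy]; rewrite revn_Gpoly.
Qed.

Lemma Bpoly_v1 x y : le x y -> (B x y).[1] = (1 - 'X) ^+ rk x y.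
Proof.
have [n] := ubnP (rk x y); elim: n x y => // n IHn x y rk_lt_n xy.
have [<- | nxy] := eqVneq x y; first by rewrite Bpoly_refl rk_refl hornerC.
rewrite Bpoly_rec ?rk_gt0 // hornerD hornerN subst_uv_v1 horner_sum.
suff -> : \sum_(z | le x z && lt z y) (B x z * hom_uv (rk x y - rk x z) (G z y)).[1] =
          \sum_(z | le x z && lt z y) (1 - 'X) ^+ rk x z * revn (rk z y) (G z y).
  by rewrite -{1}(sum_revn_Gpoly xy) (sum_interval_last _ xy) Gpoly_refl rk_refl revn01 mulr1 addrK.
apply: eq_bigr => z /andP [xz /andP [nzy zy]].
rewrite hornerM (IHn x z (leq_trans (rk_lt_lower xz zy nzy) rk_lt_n) xz).
by rewrite (rk_add xz zy) addKn hom_uv_v1 ?size_Gpoly.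
Qed.

Lemma Bpoly_u1 x y : le x y -> x != y -> map_poly (horner_eval 1) (B x y) = 0.
Proof.
have [n] := ubnP (rk x y); elim: n x y => // n IHn x y rk_lt_n xy nxy.
rewrite Bpoly_rec ?rk_gt0 //.
rewrite rmorphB /= subst_uv_u1 rmorph_sum (bigD1 x) /=; last by rewrite reflT ltE nxy xy.
rewrite rmorphM /= Bpoly_refl rmorph1 mul1r hom_uv_u1 big1 ?addr0 ?subrr //.
move=> z /andP [/andP [xz /andP [nzy zy]] nzx].
by rewrite rmorphM /= (IHn x z (leq_trans (rk_lt_lower xz zy nzy) rk_lt_n) xz) ?mul0r 1?eq_sym.
Qed.

Lemma deg_Bpoly x y : le x y -> x != y -> ((size (B x y)).-1.*2 < rk x y)%N.
Proof.
have [n] := ubnP (rk x y); elim: n x y => // n IHn x y rk_lt_n xy nxy.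
have e_gt0 := rk_gt0 xy nxy.
rewrite Bpoly_rec //.
pose low (p : {poly {poly int}}) := ((size p).-1.*2 < rk x y)%N.
have lowD p q : low p -> low q -> low (p + q) by rewrite /low; move: (size_polyD p q); lia.
have lowN p : low p -> low (- p) by rewrite /low size_opp.
apply: (lowD); first by move: (size_subst_uv (G x y)) (deg_Gpoly e_gt0); rewrite /low; lia.
apply/lowN/(big_ind low) => //; first by rewrite /low size_poly0.
move=> z /andP [xz /andP [nzy zy]].
have := size_polyMleq (B x z) (hom_uv (rk x y - rk x z) (G z y)).
move: (size_hom_uv (rk x y - rk x z) (G z y)) (deg_Gpoly (rk_gt0 zy nzy)) (rk_add xz zy).
have [<- | nxz] := eqVneq x z; first by rewrite Bpoly_refl size_poly1 /low; lia.
by move: (IHn x z (leq_trans (rk_lt_lower xz zy nzy) rk_lt_n) xz nxz); rewrite /low; lia.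
Qed.

End EulerianPoset.

Theorem proposition2p10 (T : finType) (le : rel T) (b t : T) (d : nat) :
  eulerian le b t -> rk le b t = d -> (0 < d)%N ->
  [/\ (Bpoly le b t).[1] = (1 - 'X) ^+ d,
      map_poly (fun p : {poly int} => p.[1]) (Bpoly le b t) = 0 &
      ((size (Bpoly le b t)).-1.*2 < d)%N].
Proof.
move=> [[reflT antiT transT] [bot_le le_top maxchain_eq mobius_sign]] <- d_gt0.
have nbt : b != t by apply: contraTneq d_gt0 => ->; rewrite rk_refl.
split.
- exact: Bpoly_v1.
- exact: Bpoly_u1.
- exact: deg_Bpoly.
Qed.
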